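(* Let $\mathcal{G}$ be an input-total system. If $\mathcal{G}\models\mathit{stratNI}$, then $\mathcal{G}\models\mathit{GNI}$, where $\mathit{stratNI}:=\forall\pi_1.\langle\langle\{\xi_N\}\rangle\rangle\pi_2.\ \square\big(\bigwedge_{a\in O}a_{\pi_1}\leftrightarrow a_{\pi_2}\big)$ and $\mathit{GNI}:=\forall\pi_1.\forall\pi_2.\exists\pi_3.\ \square\big(\bigwedge_{a\in H}a_{\pi_1}\leftrightarrow a_{\pi_3}\big)\wedge\square\big(\bigwedge_{a\in O}a_{\pi_2}\leftrightarrow a_{\pi_3}\big)$.
   Context: A multi-stage concurrent game structure (MSCGS) is $\mathcal{G}=(S,s_0,\Xi,\mathscr{M},\delta,d,\mathbf{AP},\ell)$: finite states $S$, initial state $s_0$, finite agents $\Xi$, finite moves $\mathscr{M}$, transition function $\delta:S\times(\Xi\to\mathscr{M})\to S$, stage function $d:\Xi\to\mathbb{N}$, atomic propositions $\mathbf{AP}$, labelling $\ell:S\to2^{\mathbf{AP}}$. A system here is an MSCGS with agents $\xi_N$ (resolving non-determinism), $\xi_H$ (choosing high-security inputs) and $\xi_L$ (choosing low-security inputs), where $\mathbf{AP}$ contains pairwise disjoint sets $H$ (high inputs), $L$ (low inputs) and $O$ (outputs), and the move of $\xi_H$ (resp. $\xi_L$) determines the values of the propositions in $H$ (resp. $L$) in the next state. The system is input-total if in each state $\xi_H$ and $\xi_L$ can choose every possible valuation of their input propositions. Semantics of $\texttt{HyperATL}^*$ used here: a strategy for agent $\xi$ is $f_\xi:S^+\times(\{\xi'\mid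 d(\xi')<d(\xi)\}\to\mathscr{M})\to\mathscr{M}$; for $A\subseteq\Xi$, strategies $F_A$ and state $s$, $\mathit{out}(\mathcal{G},s,F_A)$ is the set of $u\in S^\omega$ with $u(0)=s$ such that for all $i$ there is a global move vector $\sigma$ with $\delta(u(i),\sigma)=u(i+1)$ and $\sigma(\xi)=f_\xi(u[0,i],\sigma_{\mid\{\xi'\mid d(\xi')<d(\xi)\}})$ for all $\xi\in A$. For a path assignment $\Pi$, $\Pi\models\langle\langle A\rangle\rangle\pi.\varphi$ iff there exist $F_A$ such that for all $t\in\mathit{out}(\mathcal{G},\Pi(\epsilon)(0),F_A)$, $\Pi[\pi\mapsto t]\models\varphi$, where $\Pi(\epsilon)$ is the most recently added path ($\Pi(\epsilon)(0)=s_0$ if $\Pi$ is empty); $\forall\pi=\langle\langle\emptyset\rangle\rangle\pi$, $\exists\pi=\langle\langle\Xi\rangle\rangle\pi$; $a_\pi$ holds iff $a\in\ell$ of the current state of the path bound to $\pi$; temporal operators are interpreted synchronously on all paths. $\mathcal{G}\models\varphi$ iff the empty assignment satisfies $\varphi$. *)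

From mathcomp Require Import all_boot.
Set Implicit Arguments. Unset Strict Implicit. Unset Printing Implicit Defensive.

(* The three agents of a system: xiN (non-determinism), xiH (high inputs),
   xiL (low inputs).  Xi = {xiN, xiH, xiL}. *)
Inductive Agent := xiN | xiH | xiL.

Record system (S M AP : finType) := System {
  s0    : S;
  delta : S -> (Agent -> M) -> S;
  stage : Agent -> nat;
  ell   : S -> AP -> bool;
  Hi    : {set AP};
  Lo    : {set AP};
  Out   : {set AP}
}.

Section Sem.
Variables (S M AP : finType) (G : system S M AP).

Definition is_system : Prop :=
  [/\ [disjoint Hi G & Lo G], [disjoint Hi G & Out G], [disjoint Lo G & Out G],
   (forall s (sg sg' : Agent -> M), sg xiH = sg' xiH ->
      forall a, a \in Hi G -> ell G (delta G s sg) a = ell G (delta G s sg') a) &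
   (forall s (sg sg' : Agent -> M), sg xiL = sg' xiL ->
      forall a, a \in Lo G -> ell G (delta G s sg) a = ell G (delta G s sg') a)].

Definition input_total : Prop :=
  is_system /\
  (forall s (v : AP -> bool), exists m : M, forall sg : Agent -> M,
      sg xiH = m -> forall a, a \in Hi G -> ell G (delta G s sg) a = v a) /\
  (forall s (v : AP -> bool), exists m : M, forall sg : Agent -> M,
      sg xiL = m -> forall a, a \in Lo G -> ell G (delta G s sg) a = v a).

(* strategy of agent xi: S^+ x ({xi' | d xi' < d xi} -> M) -> M.
   Finite nonempty histories are represented as sequences (only nonempty
   ones are ever consulted). *)
Definition strategy (xi : Agent) :=
  seq S -> ({x : Agent | stage G x < stage G xi} -> M) -> M.

Definition restrict (xi : Agent) (sg : Agent -> M) :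
  {x : Agent | stage G x < stage G xi} -> M := fun x => sg (sval x).

Definition prefix (u : nat -> S) (i : nat) : seq S := [seq u k | k <- iota 0 i.+1].

Definition out (A : pred Agent) (F : forall xi, A xi -> strategy xi)
    (s : S) (u : nat -> S) : Prop :=
  u 0 = s /\
  forall i, exists sg : Agent -> M,
    delta G (u i) sg = u i.+1 /\
    forall xi (h : A xi), sg xi = F xi h (prefix u i) (@restrict xi sg).

(* semantics of <<A>> pi. phi, where s is the first state of the most
   recently quantified path and phi is the semantics of the body, as a
   predicate of the newly bound path *)
Definition strat_quant (A : pred Agent) (s : S) (phi : (nat -> S) -> Prop) : Prop :=
  exists F : (forall xi, A xi -> strategy xi), forall t, out F s t -> phi t.

(* forall pi = <<{}>> pi ,  exists pi = <<Xi>> pi *)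
Definition forall_path := strat_quant pred0.
Definition exists_path := strat_quant predT.

Definition glob_agree (P : {set AP}) (p1 p2 : nat -> S) : Prop :=
  forall i, forall a, a \in P -> ell G (p1 i) a = ell G (p2 i) a.

Definition models_stratNI : Prop :=
  forall_path (s0 G) (fun p1 =>
    strat_quant (fun x => if x is xiN then true else false) (p1 0) (fun p2 => glob_agree (Out G) p1 p2)).

Definition models_GNI : Prop :=
  forall_path (s0 G) (fun p1 =>
    forall_path (p1 0) (fun p2 =>
      exists_path (p2 0) (fun p3 =>
        glob_agree (Hi G) p1 p3 /\ glob_agree (Out G) p2 p3))).
End Sem.

From Pilot Require Import Defs.
From mathcomp Require Import all_boot.
From Stdlib Require Import ClassicalEpsilon.

Set Implicit Arguments.
Unset Strict Implicit.

(* Fix a play p1 and a play p2.  Because stratNI holds along p2, the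
   nondeterminism agent xiN has a strategy F_N keeping every outcome
   output-equivalent to p2.  Let the grand coalition play F_N for xiN and, for
   xiH, at each step the high move that (by input-totality) reproduces the
   high inputs of p1 at the next position.  Every outcome of this profile is
   also an outcome of F_N alone, so it agrees with p2 on the outputs, and it
   agrees with p1 on the high inputs by construction. *)

Lemma last_prefix (S : finType) (u : nat -> S) i x : last x (Defs.prefix u i) = u i.
Proof. by rewrite /Defs.prefix -addn1 iotaD map_cat last_cat /= add0n. Qed.

Lemma size_prefix (S : finType) (u : nat -> S) i : size (Defs.prefix u i) = i.+1.
Proof. by rewrite /Defs.prefix size_map size_iota. Qed.

Section Outcomes.
Variables (S M AP : finType) (G : system S M AP).

Definition is_play (s : S) (u : nat -> S) : Prop :=
  u 0 = s /\ forall i, exists sg : Agent -> M, delta G (u i) sg = u i.+1.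

Definition no_strategy : forall xi, pred0 xi -> strategy G xi :=
  fun xi h => False_rect _ (notF h).

Lemma out_pred0P (F : forall xi, pred0 xi -> strategy G xi) s u :
  out F s u <-> is_play s u.
Proof.
split=> -[u0 step]; split=> // i; have [sg sgP] := step i.
- by exists sg; case: sgP.
- by exists sg; split=> // -[].
Qed.

Lemma out_subpred (A B : pred Agent)
    (FA : forall xi, A xi -> strategy G xi) (FB : forall xi, B xi -> strategy G xi) s u :
  subpred A B -> (forall xi (hA : A xi) (hB : B xi), FA xi hA = FB xi hB) ->
  out FB s u -> out FA s u.
Proof.
move=> subAB FAB [u0 step]; split=> // i.
have [sg [sg_step sgF]] := step i.
by exists sg; split=> // xi hA; rewrite (FAB xi hA (subAB xi hA)); exact: sgF.
Qed.

Lemma high_input_choice : input_total G ->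
  exists fm : S -> (AP -> bool) -> M, forall s v (sg : Agent -> M),
    sg xiH = fm s v -> forall a, a \in Hi G -> ell G (delta G s sg) a = v a.
Proof.
move=> [_ [high _]].
exists (fun s v => proj1_sig (constructive_indefinite_description _ (high s v))).
by move=> s v; exact: proj2_sig (constructive_indefinite_description _ (high s v)).
Qed.

Section CopyHigh.
Variables (fm : S -> (AP -> bool) -> M) (p : nat -> S).
Hypothesis fmP : forall s v (sg : Agent -> M),
  sg xiH = fm s v -> forall a, a \in Hi G -> ell G (delta G s sg) a = v a.

(* A history [h] of length i.+1 ends at position i, so [size h] is the
   position whose high inputs are to be reproduced. *)
Definition copy_high : strategy G xiH :=
  fun h _ => fm (last (p 0) h) (ell G (p (size h))).

Lemma out_copy_high (A : pred Agent) (F : forall xi, A xi -> strategy G xi)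
    (hH : A xiH) t :
  F xiH hH = copy_high -> out F (p 0) t -> glob_agree G (Hi G) p t.
Proof.
move=> FH [t0 step] [|i] a aH; first by rewrite t0.
have [sg [<- sgF]] := step i.
have sgH : sg xiH = fm (t i) (ell G (p i.+1)).
  by rewrite (sgF xiH hH) FH /copy_high last_prefix size_prefix.
by rewrite (fmP sgH).
Qed.

End CopyHigh.

Definition is_xiN (xi : Agent) : bool := if xi is xiN then true else false.

Definition grand_profile (FN : forall xi, is_xiN xi -> strategy G xi)
    (fH : strategy G xiH) (m0 : M) : forall xi, predT xi -> strategy G xi :=
  fun xi _ => match xi return strategy G xi with
              | xiN => FN xiN erefl | xiH => fH | xiL => fun _ _ => m0 end.

Lemma out_grand_profile FN fH m0 s u :
  out (grand_profile FN fH m0) s u -> out FN s u.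
Proof.
apply: out_subpred => // -[] // hN hB.
by rewrite /grand_profile (eq_irrelevance hN erefl).
Qed.

End Outcomes.

Theorem lemma4p1 (S M AP : finType) (G : system S M AP) :
  input_total G -> models_stratNI G -> models_GNI G.
Proof.
move=> /high_input_choice [fm fmP] [F0 NI].
exists (@no_strategy _ _ _ G) => p1 /out_pred0P [p1_0 _].
exists (@no_strategy _ _ _ G) => p2 /out_pred0P [p2_0 p2_step].
have [FN FN_out] : strat_quant G is_xiN (p2 0) (glob_agree G (Out G) p2).
  by apply/NI/out_pred0P; split; [rewrite p2_0 p1_0 | exact: p2_step].
(* The move of xiL is irrelevant; [fm] merely provides one. *)
set F := grand_profile FN (copy_high fm p1) (fm (p1 0) (ell G (p1 0))).
exists F => t out_t; split.
- have out_t1 : out F (p1 0) t by rewrite -p2_0.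
  exact: (out_copy_high fmP (hH := isT) erefl out_t1).
- exact/FN_out/out_grand_profile/out_t.
Qed.
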